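(* Let $\alpha, \beta, \gamma \in (0,1)$ with $\gamma < \min\{\frac{\alpha}{\beta}, \frac{\beta}{\alpha}\}$. Then: (1) for $d$ sufficiently large, $W(\alpha, \beta, \gamma)$ is decreasing in $\alpha$ and in $\beta$ and increasing in $\gamma$; (2) for $d$ sufficiently large, $W(\alpha, \beta, \beta)$ is decreasing in $\beta$.
   Context: For $\alpha,\beta,\gamma\in(0,1)$, $W(\alpha,\beta,\gamma) = \Pr_{X \sim \mathcal{U}(\mathcal{S}^{d-1})} (X_1 > \alpha,\ X_1 \gamma + X_2 \sqrt{1 - \gamma^2} > \beta)$, where $\mathcal{U}(\mathcal{S}^{d-1})$ is the uniform distribution on the Euclidean unit sphere in $\mathbb{R}^d$; equivalently, the relative volume of the intersection of the spherical caps $\{u:\langle u,x\rangle\ge\alpha\}$ and $\{u:\langle u,y\rangle\ge\beta\}$ for unit vectors $x,y$ with $\langle x,y\rangle=\gamma$. For $0<\gamma\le\min\{\alpha/\beta,\beta/\alpha\}$ one has $W(\alpha,\beta,\gamma)=d^{\Theta(1)}\left(\frac{1-\alpha^2-\beta^2-\gamma^2+2\alpha\beta\gamma}{1-\gamma^2}\right)^{d/2}$; the monotonicity is understood for this asymptotic expression (ignoring the $d^{\Theta(1)}$ factor). *)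

From mathcomp Require Import all_boot all_order all_algebra.
Set Implicit Arguments. Unset Strict Implicit. Unset Printing Implicit Defensive.
Import Order.TTheory GRing.Theory Num.Theory.
Local Open Scope ring_scope.

Definition Wbase (R : rcfType) (a b g : R) : R :=
  (1 - a ^+ 2 - b ^+ 2 - g ^+ 2 + 2 * a * b * g) / (1 - g ^+ 2).

(* The asymptotic expression (Wbase)^(d/2), written as (sqrt Wbase)^d.
   Num.sqrt is 0 on negatives, so this equals max(Wbase,0)^(d/2)
   (the caps are then disjoint / the expression degenerate). *)
Definition Wasym (R : rcfType) (d : nat) (a b g : R) : R :=
  Num.sqrt (Wbase a b g) ^+ d.

Definition admissible (R : rcfType) (a b g : R) : Prop :=
  [/\ 0 < a < 1, 0 < b < 1, 0 < g < 1, g < a / b & g < b / a].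

(** The base (1 - a^2 - b^2 - g^2 + 2abg) / (1 - g^2) of the asymptotic expression is a
    rational function whose monotonicity reduces to sign checks on explicit factorisations:
    in [a] the numerator changes by (a1 - a2)(a1 + a2 - 2bg), negative as soon as both
    [a_i] exceed [bg], i.e. [g < a/b]; [b] is symmetric; in [g] the cross-multiplied
    difference is (g2 - g1)((b - ag1)(a - bg2) + (b - ag2)(a - bg1)); on the diagonal the
    base is (1 - b)(1 + 2b)/(1 + b). Raising the square root to the power [d >= 1]
    preserves these strict inequalities wherever the larger value is positive. *)
From mathcomp Require Import all_boot all_order all_algebra.
From mathcomp Require Import ring lra.
Set Implicit Arguments. Unset Strict Implicit. Unset Printing Implicit Defensive.
Import Order.TTheory GRing.Theory Num.Theory.
Local Open Scope ring_scope.

Lemma sqrtrXn_gt0 (R : rcfType) (n : nat) (x : R) :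
  (0 < n)%N -> (0 < Num.sqrt x ^+ n) = (0 < x).
Proof.
move=> n_gt0; rewrite lt0r expf_eq0 n_gt0 exprn_ge0 ?sqrtr_ge0 // andbT.
by rewrite -sqrtr_gt0 lt0r sqrtr_ge0 andbT.
Qed.

Lemma ler_sqrtXn (R : rcfType) (n : nat) (x y : R) :
  x <= y -> Num.sqrt x ^+ n <= Num.sqrt y ^+ n.
Proof. by move=> le_xy; rewrite lerXn2r ?nnegrE ?sqrtr_ge0 ?ler_wsqrtr. Qed.

Lemma ltr_sqrtXn (R : rcfType) (n : nat) (x y : R) :
  (0 < n)%N -> 0 < y -> x < y -> Num.sqrt x ^+ n < Num.sqrt y ^+ n.
Proof. by move=> n_gt0 y_gt0 lt_xy; rewrite ltrXn2r ?sqrtr_ge0 ?ltr_sqrt // -lt0n. Qed.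

Lemma Wasym_lt (R : rcfType) (d : nat) (a b g a' b' g' : R) : (0 < d)%N ->
  Wbase a b g < Wbase a' b' g' ->
  Wasym d a b g <= Wasym d a' b' g' /\
  (0 < Wasym d a' b' g' -> Wasym d a b g < Wasym d a' b' g').
Proof.
move=> d_gt0 lt_W; split; first by rewrite ler_sqrtXn // ltW.
by rewrite /Wasym sqrtrXn_gt0 // => W_gt0; apply: ltr_sqrtXn.
Qed.

Lemma admissibleP (R : rcfType) (a b g : R) : admissible a b g ->
  [/\ 0 < a, 0 < b, 0 < g < 1, g * b < a & g * a < b].
Proof.
by case=> /andP[a_gt0 _] /andP[b_gt0 _] g_bnd; rewrite !ltr_pdivlMr.
Qed.

Lemma WbaseC (R : rcfType) (a b g : R) : Wbase a b g = Wbase b a g.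
Proof. by rewrite /Wbase; congr (_ / _); ring. Qed.

Lemma Wbase_decreasing_l (R : rcfType) (a1 a2 b g : R) :
  g ^+ 2 < 1 -> g * b <= a1 -> a1 < a2 -> Wbase a2 b g < Wbase a1 b g.
Proof.
move=> g_sqr_lt1 gb_le_a1 lt_a12.
rewrite /Wbase ltr_pM2r ?invr_gt0 ?subr_gt0 //.
have : 0 < (a2 - a1) * (a2 + a1 - 2 * (g * b)) by apply: mulr_gt0; lra.
lra.
Qed.

Lemma Wbase_increasing_g (R : rcfType) (a b g1 g2 : R) :
  0 < a -> 0 < b -> -1 < g1 -> g1 < g2 -> g2 < 1 -> g2 * b < a -> g2 * a < b ->
  Wbase a b g1 < Wbase a b g2.
Proof.
move=> a_gt0 b_gt0 g1_gtN1 lt_g12 g2_lt1 g2b_lt_a g2a_lt_b.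
have D1_gt0 : 0 < 1 - g1 ^+ 2 by nra.
have D2_gt0 : 0 < 1 - g2 ^+ 2 by nra.
rewrite /Wbase ltr_pdivrMr // [_ / _ * _]mulrAC ltr_pdivlMr //.
have : 0 < (g2 - g1) * ((b - a * g1) * (a - b * g2) + (b - a * g2) * (a - b * g1)).
  by apply: mulr_gt0; [lra | apply: addr_gt0; apply: mulr_gt0; nra].
lra.
Qed.

Lemma Wbase_diagE (R : rcfType) (b : R) :
  -1 < b -> b < 1 -> Wbase b b b = (1 - b) * (1 + 2 * b) / (1 + b).
Proof.
move=> b_gtN1 b_lt1; rewrite /Wbase; field.
by apply/andP; split; apply/eqP; nra.
Qed.

Lemma Wbase_diag_gt0 (R : rcfType) (b : R) : 0 <= b -> b < 1 -> 0 < Wbase b b b.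
Proof.
by move=> b_ge0 b_lt1; rewrite Wbase_diagE ?divr_gt0 ?mulr_gt0 //; lra.
Qed.

Lemma Wbase_diag_decreasing (R : rcfType) (b1 b2 : R) :
  0 <= b1 -> b1 < b2 -> b2 < 1 -> Wbase b2 b2 b2 < Wbase b1 b1 b1.
Proof.
move=> b1_ge0 lt_b12 b2_lt1.
rewrite !Wbase_diagE; try lra.
rewrite ltr_pdivrMr; last lra.
rewrite [_ / _ * _]mulrAC ltr_pdivlMr; last lra.
have : 0 < 2 * (b2 - b1) * (b1 + b2 + b1 * b2) by rewrite !mulr_gt0 //; nra.
lra.
Qed.

Theorem lemma4 (R : rcfType) :
  exists d0 : nat, forall d : nat, (d0 <= d)%N ->
    (* (1a) decreasing in alpha *)
    (forall a1 a2 b g : R, admissible a1 b g -> admissible a2 b g -> a1 < a2 ->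
       Wasym d a2 b g <= Wasym d a1 b g /\
       (0 < Wasym d a1 b g -> Wasym d a2 b g < Wasym d a1 b g)) /\
    (* (1b) decreasing in beta *)
    (forall a b1 b2 g : R, admissible a b1 g -> admissible a b2 g -> b1 < b2 ->
       Wasym d a b2 g <= Wasym d a b1 g /\
       (0 < Wasym d a b1 g -> Wasym d a b2 g < Wasym d a b1 g)) /\
    (* (1c) increasing in gamma *)
    (forall a b g1 g2 : R, admissible a b g1 -> admissible a b g2 -> g1 < g2 ->
       Wasym d a b g1 <= Wasym d a b g2 /\
       (0 < Wasym d a b g2 -> Wasym d a b g1 < Wasym d a b g2)) /\
    (* (2) W(beta,beta,beta) decreasing in beta *)
    (forall b1 b2 : R, 0 < b1 -> b1 < b2 -> b2 < 1 ->
       Wasym d b2 b2 b2 < Wasym d b1 b1 b1).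
Proof.
exists 1%N => d d_gt0; split; [|split; [|split]].
- move=> a1 a2 b g /admissibleP[_ _ /andP[g_gt0 g_lt1] gb_lt_a1 _] _ lt_a12.
  by apply: Wasym_lt => //; apply: Wbase_decreasing_l lt_a12; [nra | exact: ltW].
- move=> a b1 b2 g /admissibleP[_ _ /andP[g_gt0 g_lt1] _ ga_lt_b1] _ lt_b12.
  rewrite /Wasym ![Wbase a _ g]WbaseC.
  by apply: Wasym_lt => //; apply: Wbase_decreasing_l lt_b12; [nra | exact: ltW].
- move=> a b g1 g2 /admissibleP[a_gt0 b_gt0 /andP[g1_gt0 _] _ _].
  move=> /admissibleP[_ _ /andP[_ g2_lt1] g2b_lt_a g2a_lt_b] lt_g12.
  by apply: Wasym_lt => //; apply: Wbase_increasing_g => //; lra.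
- move=> b1 b2 b1_gt0 lt_b12 b2_lt1.
  have [_] := Wasym_lt d_gt0 (Wbase_diag_decreasing (ltW b1_gt0) lt_b12 b2_lt1).
  by apply; rewrite /Wasym sqrtrXn_gt0 // Wbase_diag_gt0 //; lra.
Qed.
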